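(* Let $n\geq 2$ be an integer and let $m\neq\pm1$ be a square-free integer. Let $\sqrt[n]{m}$ denote a root of $X^n-m$. Then every algebraic integer in $\mathbb{Q}(\sqrt[n]{m})$ can be written in the basis $(1,\sqrt[n]{m},\ldots,\sqrt[n]{m^{n-1}})$ with rational coefficients having a denominator $d$ satisfying $\gcd(d,m)=1$.
   Context: Here $\sqrt[n]{m^{j}}$ means $(\sqrt[n]{m})^{j}$. Since $m$ is square-free and $m\neq\pm1$, $X^n-m$ is irreducible over $\mathbb{Q}$, so $(1,\sqrt[n]{m},\ldots,\sqrt[n]{m^{n-1}})$ is a $\mathbb{Q}$-basis of $\mathbb{Q}(\sqrt[n]{m})$. *)

From mathcomp Require Import all_boot all_order all_algebra all_field.
Set Implicit Arguments. Unset Strict Implicit. Unset Printing Implicit Defensive.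
Import Order.TTheory GRing.Theory Num.Theory.

(* An integer m is square-free iff no square of a prime divides it
   (so 0 is not square-free). *)
Definition squarefree_int (m : int) : Prop :=
  forall p : nat, prime p -> ~~ (p * p %| `|m|)%N.

From mathcomp Require Import all_boot all_order all_algebra all_field.
Import Order.TTheory GRing.Theory Num.Theory.
From mathcomp Require Import zify ring.
Set Implicit Arguments. Unset Strict Implicit. Unset Printing Implicit Defensive.
Local Open Scope ring_scope.

(* Let x = sum_i (b_i / d) theta^i be integral and let p be a prime dividing
   both d and m.  If p does not divide every b_i, take the least j with p not
   dividing b_j; subtracting the integral terms i < j and multiplying by
   theta^(n-1-j) leaves (b_j / p) theta^(n-1) plus terms that contain
   theta^n = m and are therefore integral.  The n-th power of (b_j / p)
   theta^(n-1) is the rational number b_j^n m^(n-1) / p^n, which is not an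
   integer because p exactly divides m.  Hence p divides every b_i and can be
   cancelled from d; repeating this makes d coprime to m. *)

Lemma Aint_ratio_dvdn (a : int) (k : nat) :
  (0 < k)%N -> (a%:~R / k%:R : algC) \in Aint -> (k %| `|a|)%N.
Proof.
move=> k_gt0 aA.
have /intrP[z Ez] : (a%:~R / k%:R : algC) \is a Num.int.
  by rewrite Cint_rat_Aint // rpred_div ?rpred_int ?rpred_nat.
have k_neq0 : (k%:R : algC) != 0 by rewrite pnatr_eq0 -lt0n.
have -> : a = z * k%:Z.
  by apply: (@intr_inj algC); rewrite rmorphM /= -Ez -pmulrn divfK.
by rewrite abszM dvdn_mull.
Qed.

Lemma prime_dvd_of_expn_dvd (p b k n : nat) :
  prime p -> ~~ (p * p %| k)%N -> (0 < n)%N ->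
  (p ^ n %| b ^ n * k ^ n.-1)%N -> (p %| b)%N.
Proof.
move=> p_pr p2_ndvd n_gt0; apply: contraLR => p_ndvd_b.
have k_gt0 : (0 < k)%N.
  by rewrite lt0n; apply: contraNneq p2_ndvd => ->; rewrite dvdn0.
have cop : coprime (p ^ n) (b ^ n).
  by rewrite coprime_pexpl // coprime_sym coprime_pexpl // coprime_sym prime_coprime.
have logk_le1 : (logn p k <= 1)%N by rewrite leqNgt -(pfactor_dvdn 2 p_pr k_gt0).
rewrite Gauss_dvdr // pfactor_dvdn ?expn_gt0 ?k_gt0 // lognX -ltnNge.
by apply: leq_ltn_trans (leq_mul (leqnn _) logk_le1) _; rewrite muln1 ltn_predL.
Qed.

Section PureRoot.

Variables (n : nat) (m : int) (theta : algC).
Hypotheses (n_gt0 : (0 < n)%N) (theta_n : theta ^+ n = m%:~R).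

Lemma Aint_pure_root : theta \in Aint.
Proof.
apply: (@root_monic_Aint ('X^n - (m%:~R)%:P)).
- by rewrite /root !hornerE theta_n subrr.
- by rewrite monicXnsubC.
- by rewrite polyOverXnsubC rpred_int.
Qed.

Lemma Aint_top_term_dvdz (p : nat) (b : int) :
  prime p -> ~~ (p * p %| `|m|)%N ->
  (b%:~R / p%:R) * theta ^+ n.-1 \in Aint -> (p%:Z %| b)%Z.
Proof.
move=> p_pr p2_ndvd topA; rewrite dvdzE absz_nat.
apply: (prime_dvd_of_expn_dvd p_pr p2_ndvd n_gt0).
rewrite -!abszX -abszM; apply: Aint_ratio_dvdn; first by rewrite expn_gt0 prime_gt0.
suff -> : ((b ^+ n * m ^+ n.-1)%:~R / (p ^ n)%:R : algC)
        = (b%:~R / p%:R * theta ^+ n.-1) ^+ n by rewrite rpredX.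
rewrite exprMn expr_div_n -exprM mulnC exprM theta_n rmorphM /= !rmorphXn /=.
by rewrite mulrAC.
Qed.

Lemma Aint_tail_top_term (p : nat) (b : 'I_n -> int) (j : 'I_n) :
  (p%:Z %| m)%Z -> (0 < p)%N ->
  \sum_(i < n | (j <= i)%N) (b i)%:~R / p%:R * theta ^+ i \in Aint ->
  (b j)%:~R / p%:R * theta ^+ n.-1 \in Aint.
Proof.
move=> /dvdzP[m' Em] p_gt0 sumA.
have p_neq0 : (p%:R : algC) != 0 by rewrite pnatr_eq0 -lt0n.
have j_le : (j <= n.-1)%N by rewrite -ltnS prednK.
have := rpredM sumA (rpredX (n.-1 - j) Aint_pure_root).
rewrite mulr_suml (bigD1 j) //= -mulrA -exprD subnKC //.
rewrite rpredDr //; apply: rpred_sum => i /andP[ji /negPf i_neq_j].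
have lt_ji : (j < i)%N by rewrite ltn_neqAle ji andbT eq_sym val_eqE i_neq_j.
rewrite -mulrA -exprD.
have -> : (i + (n.-1 - j) = n + (i - j.+1))%N by lia.
rewrite exprD theta_n Em rmorphM /= -pmulrn.
have -> : (b i)%:~R / p%:R * (m'%:~R * p%:R * theta ^+ (i - j.+1))
        = (b i)%:~R * m'%:~R * theta ^+ (i - j.+1) :> algC by field.
by rewrite !rpredM ?rpred_int ?rpredX ?Aint_pure_root.
Qed.

Lemma Aint_coefs_dvdz (p : nat) (b : 'I_n -> int) :
  prime p -> (p %| `|m|)%N -> ~~ (p * p %| `|m|)%N ->
  \sum_(i < n) (b i)%:~R / p%:R * theta ^+ i \in Aint ->
  forall i, (p%:Z %| b i)%Z.
Proof.
move=> p_pr p_dvd_m p2_ndvd sumA.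
have p_neq0 : (p%:R : algC) != 0 by rewrite pnatr_eq0 -lt0n prime_gt0.
suff dvd_below k (i : 'I_n) : (i < k)%N -> (p%:Z %| b i)%Z by move=> i; apply: dvd_below.
elim: k i => [//|k IHk] i; rewrite ltnS leq_eqVlt => /predU1P[i_eq_k|]; last exact: IHk.
have lowA : \sum_(l < n | (l < i)%N) (b l)%:~R / p%:R * theta ^+ l \in Aint.
  apply: rpred_sum => l; rewrite i_eq_k => /IHk/divzK <-.
  rewrite rmorphM /= -pmulrn mulfK //.
  by rewrite rpredM ?rpred_int ?rpredX ?Aint_pure_root.
apply: (Aint_top_term_dvdz p_pr p2_ndvd).
apply: (Aint_tail_top_term (b := b)); rewrite ?dvdzE ?prime_gt0 //.
move: sumA; rewrite (bigID (fun l : 'I_n => (l < i)%N)) /= rpredDl //.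
by rewrite (eq_bigl (fun l : 'I_n => (i <= l)%N)) // => l; rewrite -leqNgt.
Qed.

Definition has_denom (x : algC) (d : nat) :=
  exists b : 'I_n -> int, x = \sum_(i < n) (b i)%:~R / d%:R * theta ^+ i.

Lemma has_denom_descent (x : algC) (p e : nat) :
  prime p -> (p %| `|m|)%N -> ~~ (p * p %| `|m|)%N -> (0 < e)%N ->
  x \in Aint -> has_denom x (p * e) -> has_denom x e.
Proof.
move=> p_pr p_dvd_m p2_ndvd e_gt0 xA [b Ex].
have p_neq0 : (p%:R : algC) != 0 by rewrite pnatr_eq0 -lt0n prime_gt0.
have e_neq0 : (e%:R : algC) != 0 by rewrite pnatr_eq0 -lt0n.
have sumA : \sum_(i < n) (b i)%:~R / p%:R * theta ^+ i \in Aint.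
  suff -> : \sum_(i < n) (b i)%:~R / p%:R * theta ^+ i = e%:R * x.
    by rewrite rpredM ?rpred_nat.
  rewrite Ex mulr_sumr; apply: eq_bigr => i _.
  by rewrite natrM; field; rewrite e_neq0 p_neq0.
have dvd_b := Aint_coefs_dvdz p_pr p_dvd_m p2_ndvd sumA.
exists (fun i => (b i %/ p)%Z); rewrite Ex; apply: eq_bigr => i _.
by rewrite -{1}(divzK (dvd_b i)) rmorphM /= -pmulrn natrM; field; rewrite e_neq0 p_neq0.
Qed.

Lemma has_denom_coprime (x : algC) (d : nat) :
  squarefree_int m -> x \in Aint -> (0 < d)%N -> has_denom x d ->
  exists d', [/\ (0 < d')%N, coprime d' `|m| & has_denom x d'].
Proof.
move=> m_sqf xA; elim/ltn_ind: d => d IHd d_gt0 xd.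
have [cop|] := boolP (coprime d `|m|); first by exists d.
have m_gt0 : (0 < `|m|)%N.
  by rewrite lt0n; apply: contraTneq (m_sqf 2 isT) => ->; rewrite dvdn0.
rewrite coprime_has_primes // => /negbNE/hasP[p]; rewrite !mem_primes.
case/and3P=> p_pr _ p_dvd_m /and3P[_ _ /dvdnP[e Ed]].
have e_gt0 : (0 < e)%N by move: d_gt0; rewrite Ed muln_gt0 => /andP[].
apply: (IHd e); rewrite // ?Ed ?ltn_Pmulr ?prime_gt1 //.
by apply: has_denom_descent (m_sqf p p_pr) e_gt0 xA _; rewrite // mulnC -Ed.
Qed.

End PureRoot.

Lemma rat_common_denom (I : finType) (c : I -> rat) :
  exists (d : nat) (b : I -> int), (0 < d)%N /\ forall i, c i = (b i)%:~R / d%:R.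
Proof.
pose den i := `|denq (c i)|%N.
have den_gt0 i : (0 < den i)%N by rewrite absz_gt0 denq_neq0.
exists (\prod_i den i), (fun i => numq (c i) * (\prod_(j | j != i) den j)%N).
split=> [|i]; first by rewrite prodn_gt0.
rewrite [in X in _ / X](bigD1 i) //= natrM rmorphM /= -pmulrn.
have den_neq0 : ((denq (c i))%:~R : rat) != 0 by rewrite intr_eq0 denq_neq0.
have rest_neq0 : ((\prod_(j | j != i) den j)%N%:R : rat) != 0.
  by rewrite pnatr_eq0 -lt0n prodn_gt0.
have -> : ((den i)%:R : rat) = (denq (c i))%:~R.
  by rewrite natr_absz gtr0_norm ?denq_gt0.
rewrite -{1}[c i]divq_num_den; by field; rewrite rest_neq0 den_neq0.
Qed.

Theorem corollary2p2 (n : nat) (m : int) (theta : algC) :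
  (2 <= n)%N -> squarefree_int m -> m != 1 -> m != -1 ->
  theta ^+ n = m%:~R ->
  forall x : algC,
    (exists c : 'I_n -> rat, x = \sum_(i < n) ratr (c i) * theta ^+ i) ->
    x \in Aint ->
    exists (d : nat) (a : 'I_n -> int),
      [/\ (0 < d)%N, coprime d `|m|%N &
          x = \sum_(i < n) ((a i)%:~R / d%:R) * theta ^+ i].
Proof.
(* m <> 1, -1 only serve to make the powers of theta a basis. *)
move=> n_ge2 m_sqf _ _ theta_n x [c Ex] xA.
have n_gt0 : (0 < n)%N by apply: leq_trans n_ge2.
have [d [b [d_gt0 Ec]]] := rat_common_denom c.
have xd : has_denom n theta x d.
  exists b; rewrite Ex; apply: eq_bigr => i _.
  by rewrite Ec fmorph_div /= ratr_int ratr_nat.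
have [d' [d'_gt0 cop [a Ea]]] := has_denom_coprime n_gt0 theta_n m_sqf xA d_gt0 xd.
by exists d', a.
Qed.
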